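(* Let $X$ be a quasi-Banach function space over $\mathbf{R}^d$. Then the following are equivalent: (i) $X\in A$; (ii) $T_Q:X\to X$ is bounded uniformly over all cubes $Q$; (iii) $T_Q:X\to X_{\mathrm{weak}}$ is bounded uniformly over all cubes $Q$. Moreover, in this case \[[X]_A=\sup_Q\|T_Q\|_{X\to X}=\sup_Q\|T_Q\|_{X\to X_{\mathrm{weak}}}.\]
   Context: Cubes are axis-parallel cubes in $\mathbf{R}^d$. A quasi-Banach function space over $\mathbf{R}^d$ is a complete quasi-normed space $X\subseteq L^0(\mathbf{R}^d)$ with the ideal property (if $f\in X$, $|g|\le|f|$ then $g\in X$, $\|g\|_X\le\|f\|_X$) and the saturation property (every set of positive measure contains a subset $F$ of positive measure with $\mathbf{1}_F\in X$). Köthe dual: $\|g\|_{X'}=\sup_{\|f\|_X=1}\int|fg|$. $X_{\mathrm{weak}}$: $f$ with $\mathbf{1}_{\{|f|>\lambda\}}\in X$ for all $\lambda>0$ and $\|f\|_{X_{\mathrm{weak}}}=\sup_\lambda\lambda\|\mathbf{1}_{\{|f|>\lambda\}}\|_X<\infty$. $T_Qf=\big(\frac1{|Q|}\int_Q|f|\big)\mathbf{1}_Q$. $X\in A$: $\mathbf{1}_Q\in X$ and $\mathbf{1}_Q\in X'$ for all cubes and $[X]_A=\sup_Q|Q|^{-1}\|\mathbf{1}_Q\|_X\|\mathbf{1}_Q\|_{X'}<\infty$. *)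

From HB Require Import structures.
From mathcomp Require Import all_boot all_order all_algebra.
From mathcomp Require Import all_classical all_reals all_analysis.
Set Implicit Arguments. Unset Strict Implicit. Unset Printing Implicit Defensive.
Import Order.TTheory GRing.Theory Num.Theory.
Local Open Scope classical_set_scope.
Local Open Scope ring_scope.
Local Open Scope ereal_scope.

Section defs.
Context {R : realType} {d : nat}.
Local Notation T := (d.-tuple R).
Variable mu : {measure set T -> \bar R}.

(* mu is Lebesgue measure on (the Borel sets of) R^d: boxes get their volume *)
Definition lebesgue_boxes : Prop :=
  forall a b : T, (forall i, tnth a i <= tnth b i)%R ->
    mu [set x : T | forall i, (tnth a i <= tnth x i <= tnth b i)%R]
    = (\prod_(i < d) (tnth b i - tnth a i))%:E.

Definition cube (a : T) (l : R) : set T :=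
  [set x : T | forall i, (tnth a i <= tnth x i <= tnth a i + l)%R].
Definition is_cube (Q : set T) : Prop :=
  exists (a : T) (l : R), (0 < l)%R /\ Q = cube a l.

(* A quasi-Banach function space X is encoded by its quasi-norm rho,
   extended by +oo outside X: X = {f measurable | rho f < +oo}. *)
Variable rho : (T -> R) -> \bar R.

Definition inX (f : T -> R) : Prop := measurable_fun setT f /\ rho f < +oo.

Definition is_qBFS : Prop :=
  (forall f : T -> R, 0 <= rho f) /\
      (forall f, inX f -> (rho f = 0 <-> {ae mu, forall x, f x = 0%R})) /\
      (forall f (c : R), inX f -> rho (fun x => c * f x)%R = (`|c|)%:E * rho f) /\
      (exists K : R, (1 <= K)%R /\ forall f g : T -> R, inX f -> inX g ->
          rho (fun x => f x + g x)%R <= K%:E * (rho f + rho g)) /\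
      (forall u : nat -> T -> R, (forall n, inX (u n)) ->
         (forall e : R, (0 < e)%R -> exists N, forall m n, (N <= m)%N -> (N <= n)%N ->
            rho (fun x => u n x - u m x)%R < e%:E) ->
         exists f : T -> R, inX f /\ forall e : R, (0 < e)%R -> exists N, forall n, (N <= n)%N ->
            rho (fun x => u n x - f x)%R < e%:E) /\
      (forall f g : T -> R, inX f -> measurable_fun setT g ->
         {ae mu, forall x, `|g x| <= `|f x|}%R -> rho g <= rho f) /\
      (forall E : set T, measurable E -> 0 < mu E ->
         exists F : set T, [/\ measurable F, F `<=` E, 0 < mu F & rho (\1_F : T -> R) < +oo]).

Definition kothe_norm (g : T -> R) : \bar R :=
  ereal_sup [set \int[mu]_x (`|f x * g x|)%:E | f in [set f | inX f /\ rho f = 1]].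
Definition inX' (g : T -> R) : Prop := measurable_fun setT g /\ kothe_norm g < +oo.

(* weak quasi-norm (+oo outside X_weak) *)
Definition weak_norm (f : T -> R) : \bar R :=
  ereal_sup [set lam%:E * rho (\1_[set x | lam < `|f x|]%R : T -> R)
            | lam in [set lam : R | (0 < lam)%R]].

Definition avg_op (Q : set T) (f : T -> R) : T -> R :=
  fun x => (fine (\int[mu]_(y in Q) (`|f y|)%:E) / fine (mu Q) * \1_Q x)%R.

Definition avg_bdd (nY : (T -> R) -> \bar R) (Q : set T) (C : R) : Prop :=
  forall f, inX f ->
    \int[mu]_(y in Q) (`|f y|)%:E < +oo /\ nY (avg_op Q f) <= C%:E * rho f.

Definition avg_opnorm (nY : (T -> R) -> \bar R) (Q : set T) : \bar R :=
  ereal_inf [set C%:E | C in [set C : R | (0 <= C)%R /\ avg_bdd nY Q C]].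

Definition avg_unif_bdd (nY : (T -> R) -> \bar R) : Prop :=
  exists C : R, forall Q, is_cube Q -> avg_bdd nY Q C.

Definition sup_avg_opnorm (nY : (T -> R) -> \bar R) : \bar R :=
  ereal_sup [set avg_opnorm nY Q | Q in is_cube].

Definition A_const : \bar R :=
  ereal_sup [set ((fine (mu Q))^-1)%:E * rho (\1_Q : T -> R) * kothe_norm (\1_Q : T -> R)
            | Q in is_cube].

Definition in_A : Prop :=
  (forall Q, is_cube Q -> inX (\1_Q : T -> R) /\ inX' (\1_Q : T -> R)) /\ A_const < +oo.

End defs.

From HB Require Import structures.
From mathcomp Require Import all_boot all_order all_algebra.
From mathcomp Require Import all_classical all_reals all_analysis.
From mathcomp Require Import measurable_realfun ring.
Import Order.TTheory GRing.Theory Num.Theory.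
Local Open Scope classical_set_scope.
Local Open Scope ring_scope.
Local Open Scope ereal_scope.

(* T_Q f is the multiple (|Q|^-1 \int_Q |f|) 1_Q of the indicator of Q, hence
   ||T_Q||_{X->X} = |Q|^-1 ||1_Q||_X sup_{||f||_X = 1} \int_Q |f|
                  = |Q|^-1 ||1_Q||_X ||1_Q||_{X'}:
   the upper bound is the Hoelder-type inequality \int |fg| <= ||f||_X ||g||_{X'},
   the lower bound is the definition of the Koethe norm.  The weak quasi-norm of
   c 1_Q is exactly c ||1_Q||_X, so nothing changes with X_weak as target.
   Conversely, boundedness of T_Q into X or X_weak forces 1_Q in X: apply T_Q to
   1_F, where F is a subset of Q of positive measure with 1_F in X, given by the
   saturation property. *)

Lemma ge0_lty_EFin {R : realType} {x : \bar R} :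
  0 <= x -> x < +oo -> exists2 r : R, (0 <= r)%R & x = r%:E.
Proof. by case/gee0P => [->|//]; rewrite ltxx. Qed.

Section quasi_Banach_function_space.
Context {R : realType} {d : nat}.
Local Notation T := (d.-tuple R).
Variables (mu : {measure set T -> \bar R}) (rho : (T -> R) -> \bar R).
Hypothesis X_qBFS : is_qBFS mu rho.

Lemma rho_ge0 f : 0 <= rho f.
Proof. by case: X_qBFS. Qed.

Lemma rho_eq0 {f} : inX rho f -> (rho f = 0 <-> {ae mu, forall x, f x = 0%R}).
Proof. by case: X_qBFS => _ [h _]; exact: h. Qed.

Lemma rhoZ f (c : R) : inX rho f -> rho (fun x => c * f x)%R = (`|c|)%:E * rho f.
Proof. by case: X_qBFS => _ [_ [h _]]; exact: h. Qed.

Lemma rho_saturation {E} : measurable E -> 0 < mu E ->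
  exists F : set T, [/\ measurable F, F `<=` E, 0 < mu F & rho (\1_F : T -> R) < +oo].
Proof. by case: X_qBFS => _ [_ [_ [_ [_ [_ h]]]]]; exact: h. Qed.

Lemma inXZ (c : R) f : inX rho f -> inX rho (fun x => c * f x)%R.
Proof.
move=> [mf rf]; split; first exact: measurable_funM.
by rewrite rhoZ //; exact: lte_mul_pinfty.
Qed.

Lemma inXZK {c : R} {f} : c != 0%R -> inX rho (fun x => c * f x)%R -> inX rho f.
Proof.
move=> c0 /(inXZ c^-1); congr inX; apply/funext => x; exact: mulKf.
Qed.

Lemma rho_normalize f r : inX rho f -> rho f = r%:E -> (0 < r)%R ->
  rho (fun x => r^-1 * f x)%R = 1.
Proof.
by move=> Xf rf r0; rewrite rhoZ // rf -EFinM gtr0_norm ?invr_gt0 // mulVf ?gt_eqF.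
Qed.

Lemma rho_indic_gt0 Q : measurable Q -> 0 < mu Q -> inX rho (\1_Q : T -> R) ->
  0 < rho (\1_Q : T -> R).
Proof.
move=> mQ muQ XQ; rewrite lt0e rho_ge0 andbT; apply/eqP.
move/(rho_eq0 XQ) => [N [mN N0 QN]].
have : mu Q <= mu N.
  apply: le_measure; rewrite ?inE // => x Qx; apply: QN => /=.
  by rewrite indicE mem_set //; apply/eqP; exact: oner_neq0.
by rewrite N0 leNgt muQ.
Qed.

Lemma measurable_abs_mul (f g : T -> R) : measurable_fun setT f -> measurable_fun setT g ->
  measurable_fun setT (fun x => (`|f x * g x|)%:E : \bar R).
Proof.
move=> mf mg; apply/measurable_EFinP.
have -> : (fun x => `|f x * g x|%R) = (@Num.Def.normr _ R) \o (f \* g)%R by [].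
by apply: measurableT_comp; [exact: normr_measurable | exact: measurable_funM].
Qed.

Lemma integral_abs_mul_indic (Q : set T) (f : T -> R) : measurable Q ->
  \int[mu]_x (`|f x * (\1_Q : T -> R) x|)%:E = \int[mu]_(x in Q) (`|f x|)%:E.
Proof.
move=> mQ; rewrite [RHS]integral_mkcond; apply: eq_integral => x _.
by rewrite patchE indicE; case: (x \in Q); rewrite ?mulr1 ?mulr0 ?normr0.
Qed.

Lemma integral_abs_ge0 (Q : set T) (f : T -> R) : 0 <= \int[mu]_(x in Q) (`|f x|)%:E.
Proof. by apply: integral_ge0 => x _; rewrite lee_fin. Qed.

Lemma kothe_norm_ge0 {f g} : inX rho f -> 0 < rho f -> 0 <= kothe_norm mu rho g.
Proof.
move=> Xf rf0; have [r r0 rE] := ge0_lty_EFin (rho_ge0 f) Xf.2.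
have {}r0 : (0 < r)%R by rewrite -lte_fin -rE.
apply: le_ereal_sup_tmp; exists (\int[mu]_x (`|r^-1 * f x * g x|)%:E).
  by exists (fun x => r^-1 * f x)%R => //; split; [exact: inXZ | exact: rho_normalize].
exact: integral_abs_ge0.
Qed.

Lemma kothe_holder {f g} : inX rho f -> measurable_fun setT g ->
  \int[mu]_x (`|f x * g x|)%:E <= rho f * kothe_norm mu rho g.
Proof.
move=> Xf mg; have [r r0 rE] := ge0_lty_EFin (rho_ge0 f) Xf.2.
move: r0; rewrite le_eqVlt => /predU1P[r0|r0].
  have /(rho_eq0 Xf) f0 : rho f = 0 by rewrite rE -r0.
  rewrite rE -r0 mul0e (ae_eq_integral (cst 0)) ?integral0 //.
  - exact: measurable_abs_mul Xf.1 mg.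
  - by apply: filterS f0 => x /= -> _; rewrite mul0r normr0.
have normalized : \int[mu]_x (`|r^-1 * f x * g x|)%:E <= kothe_norm mu rho g.
  by apply: ereal_sup_ubound; exists (fun x => r^-1 * f x)%R => //;
    split; [exact: inXZ | exact: rho_normalize].
have scaled : \int[mu]_x (`|r^-1 * f x * g x|)%:E
    = (r^-1)%:E * \int[mu]_x (`|f x * g x|)%:E.
  rewrite -ge0_integralZl //; last 2 first.
  - exact: measurable_abs_mul Xf.1 mg.
  - by rewrite lee_fin invr_ge0 ltW.
  by apply: eq_integral => x _; rewrite -EFinM -mulrA normrM gtr0_norm ?invr_gt0.
by move: normalized; rewrite scaled rE lee_pdivrMl.
Qed.

Lemma scale_indic_level_set (E : set T) (c lam : R) : (0 < lam)%R -> (0 <= c)%R ->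
  [set x | lam < `|c * (\1_E : T -> R) x|]%R = if (lam < c)%R then E else set0.
Proof.
move=> lam0 c0; have absE x : `|c * (\1_E : T -> R) x|%R = if x \in E then c else 0%R.
  by rewrite indicE; case: (x \in E); rewrite ?mulr1 ?mulr0 ?normr0 ?ger0_norm.
have [lc|cl] := ltP lam c; apply/seteqP; split => x /=; rewrite absE.
- by case: ifPn => [/set_mem|_] //; rewrite ltNge (ltW lam0).
- by move=> Ex; rewrite mem_set.
- by case: ifPn => _; rewrite ltNge ?cl ?(ltW lam0).
- by [].
Qed.

Lemma weak_norm_ge0 f : 0 <= weak_norm rho f.
Proof.
apply: le_ereal_sup_tmp; exists (1%:E * rho (\1_[set x | 1 < `|f x|]%R : T -> R)).
  by exists 1%R => //=; rewrite ltr01.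
by rewrite mul1e rho_ge0.
Qed.

Lemma weak_norm_scale_indic_ge {E : set T} {c lam : R} : (0 < lam < c)%R ->
  lam%:E * rho (\1_E : T -> R) <= weak_norm rho (fun x => c * (\1_E : T -> R) x)%R.
Proof.
case/andP => lam0 lc; apply: ereal_sup_ubound; exists lam => //=.
by rewrite scale_indic_level_set ?lc // (le_trans (ltW lam0) (ltW lc)).
Qed.

Lemma weak_norm_scale_indic (E : set T) (c : R) : inX rho (\1_E : T -> R) -> (0 <= c)%R ->
  weak_norm rho (fun x => c * (\1_E : T -> R) x)%R = c%:E * rho (\1_E : T -> R).
Proof.
move=> XE c0; have rho_set0 : rho (\1_set0 : T -> R) = 0.
  have -> : (\1_set0 : T -> R) = (fun x => 0 * (\1_E : T -> R) x)%R.
    by apply/funext => x; rewrite indic0 mul0r.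
  by rewrite rhoZ // normr0 mul0e.
apply/eqP; rewrite eq_le; apply/andP; split.
  apply: ge_ereal_sup => _ [lam /= lam0 <-]; rewrite scale_indic_level_set //.
  case: ifPn => lc; last by rewrite rho_set0 mule0 mule_ge0 ?rho_ge0.
  by apply: lee_wpmul2r; rewrite ?rho_ge0 // lee_fin ltW.
move: c0; rewrite [(0 <= c)%R]le_eqVlt => /predU1P[<-|c0]; first by rewrite mul0e weak_norm_ge0.
apply/lee_mul01Pr; first by rewrite mule_ge0 ?rho_ge0 // lee_fin ltW.
move=> s /andP[s0 s1]; rewrite muleA -EFinM; apply: weak_norm_scale_indic_ge.
by rewrite mulr_gt0 //= gtr_pMl.
Qed.

Definition average (Q : set T) (f : T -> R) : R :=
  (fine (\int[mu]_(y in Q) (`|f y|)%:E) / fine (mu Q))%R.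

Lemma avg_opE Q f : avg_op mu Q f = (fun x => average Q f * (\1_Q : T -> R) x)%R.
Proof. by []. Qed.

Lemma average_ge0 Q f : (0 <= average Q f)%R.
Proof. by rewrite divr_ge0 // fine_ge0 // integral_abs_ge0. Qed.

Lemma rho_avg_op Q f : inX rho (\1_Q : T -> R) ->
  rho (avg_op mu Q f) = (average Q f)%:E * rho (\1_Q : T -> R).
Proof. by move=> XQ; rewrite avg_opE rhoZ // ger0_norm ?average_ge0. Qed.

Lemma weak_norm_avg_op Q f : inX rho (\1_Q : T -> R) ->
  weak_norm rho (avg_op mu Q f) = rho (avg_op mu Q f).
Proof.
by move=> XQ; rewrite rho_avg_op // avg_opE weak_norm_scale_indic ?average_ge0.
Qed.

Lemma avg_bdd_weak_normE {Q C} : inX rho (\1_Q : T -> R) ->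
  avg_bdd mu rho (weak_norm rho) Q C <-> avg_bdd mu rho rho Q C.
Proof.
by move=> XQ; split => bdd f Xf; have [Qf_fin bddf] := bdd f Xf;
  split; rewrite // ?weak_norm_avg_op // -weak_norm_avg_op.
Qed.

Lemma avg_opnorm_weak_norm Q : inX rho (\1_Q : T -> R) ->
  avg_opnorm mu rho (weak_norm rho) Q = avg_opnorm mu rho rho Q.
Proof.
move=> XQ; rewrite /avg_opnorm; congr (ereal_inf [set _%:E | _ in _]).
by apply/seteqP; split => C /= [C0 bdd]; split; rewrite // -?avg_bdd_weak_normE //
  avg_bdd_weak_normE.
Qed.

Lemma avg_bdd_le nY Q (C C' : R) : (C <= C')%R ->
  avg_bdd mu rho nY Q C -> avg_bdd mu rho nY Q C'.
Proof.
move=> CC' bdd f Xf; have [Qf_fin bddf] := bdd f Xf; split => //.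
by apply: le_trans bddf _; apply: lee_wpmul2r; rewrite ?rho_ge0 ?lee_fin.
Qed.

Hypothesis mu_lebesgue : lebesgue_boxes mu.

Lemma cube_measurable (a : T) (l : R) : measurable (cube a l).
Proof.
have -> : cube a l = \bigcap_(i in [set: 'I_d])
    ((fun x : T => tnth x i) @^-1` `[tnth a i, (tnth a i + l)%R]%classic).
  apply/seteqP; split => x /= h i; first by move=> _; rewrite /= in_itv; exact: h.
  by have := h i I; rewrite /= in_itv.
apply: fin_bigcap_measurable; first exact: finite_finset.
move=> i _; rewrite -[X in measurable X]setTI.
exact: measurable_tnth (measurable_itv _).
Qed.

Lemma lebesgue_boxes_cube (a : T) (l : R) : (0 <= l)%R ->
  mu (cube a l) = (l ^+ d)%:E.
Proof.
move=> l0; pose b : T := [tuple (tnth a i + l)%R | i < d].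
have ab i : (tnth a i <= tnth b i)%R by rewrite tnth_mktuple lerDl.
have := mu_lebesgue a b ab; under eq_bigr do rewrite tnth_mktuple addrC addKr.
rewrite prodr_const card_ord => <-; congr (mu _).
by apply/seteqP; split => x /= h i; have := h i; rewrite tnth_mktuple.
Qed.

Lemma is_cubeP {Q : set T} : is_cube Q ->
  [/\ measurable Q, (0 < fine (mu Q))%R & mu Q = (fine (mu Q))%:E].
Proof.
move=> [a [l [l0 ->]]]; rewrite lebesgue_boxes_cube ?ltW //.
by split; [exact: cube_measurable | exact: exprn_gt0 |].
Qed.

Lemma avg_bdd_scale_indic_lty {nY Q C} : is_cube Q -> avg_bdd mu rho nY Q C ->
  exists2 c : R, (0 < c)%R & nY (fun x => c * (\1_Q : T -> R) x)%R < +oo.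
Proof.
move=> cQ bdd; have [mQ q0 QE] := is_cubeP cQ.
have [F [mF FQ F_gt0 rF]] := rho_saturation mQ (ltac:(by rewrite QE lte_fin)).
have [r _ rE] := ge0_lty_EFin (rho_ge0 _) rF.
have [m _ mE] : exists2 m : R, (0 <= m)%R & mu F = m%:E.
  apply: ge0_lty_EFin => //; apply: le_lt_trans (ltry (fine (mu Q))); rewrite -QE.
  by apply: le_measure; rewrite ?inE.
have QF : \int[mu]_(y in Q) (`|(\1_F : T -> R) y|)%:E = mu F.
  under eq_integral do rewrite ger0_norm ?indicE ?ler0n //.
  by rewrite integral_indic // setIidl.
exists (average Q \1_F); first by rewrite /average QF mE divr_gt0 // -lte_fin -mE.
have [_ bddF] := bdd _ (conj (measurable_indic mF) rF).
by apply: le_lt_trans bddF _; rewrite rE -EFinM ltry.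
Qed.

Lemma avg_bdd_indic_inX {Q C} : is_cube Q -> avg_bdd mu rho rho Q C ->
  inX rho (\1_Q : T -> R).
Proof.
move=> cQ bdd; have [c c0 c_lty] := avg_bdd_scale_indic_lty cQ bdd.
have [mQ _ _] := is_cubeP cQ.
apply: (inXZK (lt0r_neq0 c0)); split => //.
exact: measurable_funM (measurable_cst c) (measurable_indic mQ).
Qed.

Lemma avg_bdd_weak_indic_inX {Q C} : is_cube Q -> avg_bdd mu rho (weak_norm rho) Q C ->
  inX rho (\1_Q : T -> R).
Proof.
move=> cQ bdd; have [c c0 c_lty] := avg_bdd_scale_indic_lty cQ bdd.
have [mQ _ _] := is_cubeP cQ.
split; first exact: measurable_indic.
have half : (0 < c / 2 < c)%R by rewrite divr_gt0 //= ltr_pdivrMr // ltr_pMr // ltr1n.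
have := le_lt_trans (weak_norm_scale_indic_ge half) c_lty.
move: (rho_ge0 (\1_Q : T -> R)); case: (rho _) => [r _ _|_|//]; first exact: ltry.
by rewrite gt0_muley // lte_fin; case/andP: half.
Qed.

Lemma rho_indic_cube {Q} : is_cube Q -> inX rho (\1_Q : T -> R) ->
  exists2 rQ : R, (0 < rQ)%R & rho (\1_Q : T -> R) = rQ%:E.
Proof.
move=> cQ XQ; have [mQ q0 QE] := is_cubeP cQ.
have [rQ _ rQE] := ge0_lty_EFin (rho_ge0 _) XQ.2.
exists rQ => //; rewrite -lte_fin -rQE.
by apply: rho_indic_gt0 => //; rewrite QE lte_fin.
Qed.

Definition cube_A (Q : set T) : \bar R :=
  ((fine (mu Q))^-1)%:E * rho (\1_Q : T -> R) * kothe_norm mu rho (\1_Q : T -> R).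

Lemma cube_A_ge0 {Q} : is_cube Q -> inX rho (\1_Q : T -> R) -> 0 <= cube_A Q.
Proof.
move=> cQ XQ; have [_ q0 _] := is_cubeP cQ.
have [rQ rQ0 rQE] := rho_indic_cube cQ XQ.
rewrite /cube_A !mule_ge0 ?rho_ge0 ?lee_fin ?invr_ge0 ?(ltW q0) //.
by apply: (kothe_norm_ge0 XQ); rewrite rQE lte_fin.
Qed.

Lemma cube_A_lty {Q} : is_cube Q -> inX rho (\1_Q : T -> R) ->
  kothe_norm mu rho (\1_Q : T -> R) < +oo -> cube_A Q < +oo.
Proof.
move=> cQ XQ kQ_lty; have [rQ rQ0 rQE] := rho_indic_cube cQ XQ.
have [k _ kE] := ge0_lty_EFin (kothe_norm_ge0 XQ (ltac:(by rewrite rQE lte_fin))) kQ_lty.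
by rewrite /cube_A rQE kE -!EFinM ltry.
Qed.

Lemma kothe_norm_indic_le {Q C rQ} : is_cube Q -> rho (\1_Q : T -> R) = rQ%:E ->
  (0 < rQ)%R -> avg_bdd mu rho rho Q C ->
  kothe_norm mu rho (\1_Q : T -> R) <= (C * fine (mu Q) / rQ)%:E.
Proof.
move=> cQ rQE rQ0 bdd; have [mQ q0 _] := is_cubeP cQ.
have XQ : inX rho (\1_Q : T -> R) by split; [exact: measurable_indic | rewrite rQE ltry].
apply: ge_ereal_sup => _ [f [Xf rf1] <-]; rewrite integral_abs_mul_indic //.
have [Qf_lty bddf] := bdd f Xf.
have [a _ aE] := ge0_lty_EFin (integral_abs_ge0 Q f) Qf_lty.
move: bddf; rewrite rho_avg_op // /average aE rQE rf1 mule1 -EFinM !lee_fin /= => bddf.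
by rewrite ler_pdivlMr // -ler_pdivrMr // mulrAC.
Qed.

Lemma cube_A_le {Q C} : is_cube Q -> inX rho (\1_Q : T -> R) ->
  avg_bdd mu rho rho Q C -> cube_A Q <= C%:E.
Proof.
move=> cQ XQ bdd; have [_ q0 _] := is_cubeP cQ.
have [rQ rQ0 rQE] := rho_indic_cube cQ XQ.
rewrite /cube_A rQE -EFinM.
apply: le_trans (lee_wpmul2l _ (kothe_norm_indic_le cQ rQE rQ0 bdd)) _.
  by rewrite lee_fin mulr_ge0 ?invr_ge0 ?ltW.
by rewrite -EFinM lee_fin [X in (X <= _)%R](_ : _ = C) //; field; rewrite !gt_eqF.
Qed.

Lemma avg_bdd_cube_A {Q} : is_cube Q -> inX rho (\1_Q : T -> R) ->
  kothe_norm mu rho (\1_Q : T -> R) < +oo -> avg_bdd mu rho rho Q (fine (cube_A Q)).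
Proof.
move=> cQ XQ kQ_lty f Xf; have [mQ q0 _] := is_cubeP cQ.
have [rQ rQ0 rQE] := rho_indic_cube cQ XQ.
have [k _ kE] := ge0_lty_EFin (kothe_norm_ge0 XQ (ltac:(by rewrite rQE lte_fin))) kQ_lty.
have [r _ rE] := ge0_lty_EFin (rho_ge0 f) Xf.2.
have holder : \int[mu]_(y in Q) (`|f y|)%:E <= (r * k)%:E.
  rewrite -integral_abs_mul_indic // EFinM -rE -kE.
  exact: kothe_holder Xf (measurable_indic mQ).
have [a _ aE] := ge0_lty_EFin (integral_abs_ge0 Q f)
  (le_lt_trans holder (ltry _)).
split; first by rewrite aE ltry.
move: holder; rewrite rho_avg_op // /average /cube_A aE rQE kE rE /= -!EFinM !lee_fin.
set q := fine (mu Q) => holder.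
rewrite [X in (X <= _)%R](_ : _ = q^-1 * rQ * a)%R; last by ring.
rewrite [X in (_ <= X)%R](_ : _ = q^-1 * rQ * (r * k))%R; last by ring.
by rewrite ler_wpM2l // mulr_ge0 ?invr_ge0 ?ltW.
Qed.

Lemma avg_opnorm_cube_A {Q} : is_cube Q -> inX rho (\1_Q : T -> R) ->
  kothe_norm mu rho (\1_Q : T -> R) < +oo -> avg_opnorm mu rho rho Q = cube_A Q.
Proof.
move=> cQ XQ kQ_lty; have A0 := cube_A_ge0 cQ XQ.
have AE : (fine (cube_A Q))%:E = cube_A Q.
  by rewrite fineK // ge0_fin_numE // cube_A_lty.
apply/eqP; rewrite eq_le; apply/andP; split.
  apply: ge_ereal_inf; exists (fine (cube_A Q))%:E; last by rewrite AE.
  by exists (fine (cube_A Q)) => //; split; [exact: fine_ge0 | exact: avg_bdd_cube_A].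
by apply: le_ereal_inf_tmp => _ [C [_ bdd] <-]; exact: cube_A_le.
Qed.

Lemma in_A_avg_unif_bdd : in_A mu rho -> avg_unif_bdd mu rho rho.
Proof.
move=> [XQ A_lty]; exists (fine (A_const mu rho)) => Q cQ.
have [XQ1 [_ kQ_lty]] := XQ Q cQ.
have A_ge0 := cube_A_ge0 cQ XQ1.
have AQ_le : cube_A Q <= A_const mu rho by apply: ereal_sup_ubound; exists Q.
apply: avg_bdd_le (avg_bdd_cube_A cQ XQ1 kQ_lty); apply: fine_le => //.
  by rewrite ge0_fin_numE // cube_A_lty.
by rewrite ge0_fin_numE // (le_trans A_ge0).
Qed.

Lemma avg_unif_bdd_in_A : avg_unif_bdd mu rho rho -> in_A mu rho.
Proof.
move=> [C bdd]; have XQ Q (cQ : is_cube Q) := avg_bdd_indic_inX cQ (bdd Q cQ).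
split=> [Q cQ|].
  have [mQ _ _] := is_cubeP cQ; have [rQ rQ0 rQE] := rho_indic_cube cQ (XQ Q cQ).
  split; [exact: XQ | split; first exact: measurable_indic mQ].
  exact: le_lt_trans (kothe_norm_indic_le cQ rQE rQ0 (bdd Q cQ)) (ltry _).
suff A_le : A_const mu rho <= C%:E by exact: le_lt_trans A_le (ltry C).
by apply: ge_ereal_sup => _ [Q cQ <-]; exact: cube_A_le (XQ Q cQ) (bdd Q cQ).
Qed.

Lemma avg_unif_bdd_weak_normE :
  avg_unif_bdd mu rho (weak_norm rho) <-> avg_unif_bdd mu rho rho.
Proof.
split=> -[C bdd]; exists C => Q cQ.
  exact: (avg_bdd_weak_normE (avg_bdd_weak_indic_inX cQ (bdd Q cQ))).1 (bdd Q cQ).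
exact: (avg_bdd_weak_normE (avg_bdd_indic_inX cQ (bdd Q cQ))).2 (bdd Q cQ).
Qed.

Lemma A_const_sup_avg_opnorm : in_A mu rho ->
  A_const mu rho = sup_avg_opnorm mu rho rho /\
  A_const mu rho = sup_avg_opnorm mu rho (weak_norm rho).
Proof.
move=> [XQ _]; have opnormE Q : is_cube Q -> avg_opnorm mu rho rho Q = cube_A Q.
  by move=> cQ; have [XQ1 [_ kQ_lty]] := XQ Q cQ; exact: avg_opnorm_cube_A.
split; congr ereal_sup; apply: eq_imagel => Q cQ.
  by rewrite opnormE.
by rewrite avg_opnorm_weak_norm ?opnormE //; case: (XQ Q cQ).
Qed.

End quasi_Banach_function_space.

Theorem proposition3p3 (R : realType) (d : nat)
    (mu : {measure set (d.-tuple R) -> \bar R})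
    (rho : (d.-tuple R -> R) -> \bar R) :
  lebesgue_boxes mu -> is_qBFS mu rho ->
  [/\ in_A mu rho <-> avg_unif_bdd mu rho rho,
      avg_unif_bdd mu rho rho <-> avg_unif_bdd mu rho (weak_norm rho) &
      in_A mu rho ->
        A_const mu rho = sup_avg_opnorm mu rho rho /\
        A_const mu rho = sup_avg_opnorm mu rho (weak_norm rho)].
Proof.
move=> mu_lebesgue X_qBFS; split.
- by split; [exact: in_A_avg_unif_bdd | exact: avg_unif_bdd_in_A].
- by apply: iff_sym; exact: avg_unif_bdd_weak_normE.
- exact: A_const_sup_avg_opnorm.
Qed.
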